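(* Let $f_1=f_1(x^1)$ be a smooth nowhere-vanishing function depending only on $x^1$, let $f_2=k_2$, $f_3=k_3$ with $k_2,k_3\in\mathbb R\setminus\{0\}$, and $g=\frac{1}{f_1^2}dx^1\otimes dx^1+\frac{1}{k_2^2}dx^2\otimes dx^2+\frac{1}{k_3^2}dx^3\otimes dx^3$. Let $F$ satisfy $F'=\frac{1}{f_1}$. Then $V=\sum_{k=1}^3V^kE_k$, with $E_i=f_i\frac{\partial}{\partial x^i}$, is a Killing vector field of $(\mathbb R^3,g)$ if and only if $V^1(x^2,x^3)=c_1x^2+c_2x^3+c_3$, $V^2(x^1,x^3)=-c_1k_2F(x^1)-\frac{c_4}{k_3}x^3+c_5$, $V^3(x^1,x^2)=-c_2k_3F(x^1)+\frac{c_4}{k_2}x^2+c_6$ for some $c_1,\dots,c_6\in\mathbb R$.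
   Context: $x^1,x^2,x^3$ are the standard coordinates on $\mathbb R^3$; $V^k$ are smooth functions and writing $h(x^i,x^j)$ means $h$ depends only on those variables. A vector field $V$ is Killing if $\mathcal L_Vg=0$. *)

From Stdlib Require Import Reals.
From Coquelicot Require Import Coquelicot.
Open Scope R_scope.

(* Points of R^3, written (x1, x2, x3); coordinate indices 0,1,2 stand for x^1,x^2,x^3. *)
Definition pt : Type := (R * R * R)%type.

Definition coord (i : nat) (p : pt) : R :=
  match i with 0%nat => fst (fst p) | 1%nat => snd (fst p) | _ => snd p end.

Definition upd (i : nat) (p : pt) (t : R) : pt :=
  match i with
  | 0%nat => (t, snd (fst p), snd p)
  | 1%nat => (fst (fst p), t, snd p)
  | _ => (fst (fst p), snd (fst p), t)
  end.

Definition partial (i : nat) (h : pt -> R) (p : pt) : R :=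
  Derive (fun t => h (upd i p t)) (coord i p).

(* C^infinity on R^3: all partial derivatives of all orders exist and are continuous. *)
Definition smooth3 (f : pt -> R) : Prop :=
  exists S : (pt -> R) -> Prop, S f /\
    forall h, S h ->
      (forall p, continuous h p) /\
      forall i, (i < 3)%nat ->
        (forall p, ex_derive (fun t => h (upd i p t)) (coord i p)) /\ S (partial i h).

Definition smooth1 (f : R -> R) : Prop :=
  forall (n : nat) (x : R), ex_derive (Derive_n f n) x.

Definition sum3 (F : nat -> R) : R := F 0%nat + F 1%nat + F 2%nat.

(* Killing equation in coordinates: (L_W g)_{ij} = W^k d_k g_ij + g_kj d_i W^k + g_ik d_j W^k = 0,
   for a metric with components G i j and a vector field with coordinate components W k. *)
Definition is_Killing (G : nat -> nat -> pt -> R) (W : nat -> pt -> R) : Prop :=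
  forall i j : nat, (i < 3)%nat -> (j < 3)%nat -> forall p : pt,
    sum3 (fun k => W k p * partial k (G i j) p
                   + G k j p * partial i (W k) p
                   + G i k p * partial j (W k) p) = 0.

Definition frame (f1 : R -> R) (k2 k3 : R) (i : nat) (p : pt) : R :=
  match i with 0%nat => f1 (coord 0 p) | 1%nat => k2 | _ => k3 end.

Definition metric (f1 : R -> R) (k2 k3 : R) (i j : nat) (p : pt) : R :=
  if Nat.eqb i j then / (frame f1 k2 k3 i p) ^ 2 else 0.

(* coordinate components of V = sum_k V^k E_k with E_k = f_k d/dx^k *)
Definition vfield (f1 : R -> R) (k2 k3 : R) (V1 V2 V3 : pt -> R) (k : nat) (p : pt) : R :=
  frame f1 k2 k3 k p *
  match k with 0%nat => V1 p | 1%nat => V2 p | _ => V3 p end.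

From Stdlib Require Import Reals Lra Lia.
From Coquelicot Require Import Coquelicot.
Open Scope R_scope.

(* The diagonal Killing equations say that V^i does not depend on x^i.  The
   (1,2) and (1,3) equations then force d2 V^1 to depend on x^3 only and d3 V^1
   on x^2 only, so V^1 is bilinear in (x^2, x^3) with some mixed coefficient
   alpha, and integrating against F' = 1/f_1 gives V^2 and V^3 up to functions
   phi(x^2), psi(x^3).  The (2,3) equation becomes
   phi'(x^2)/k_3 + psi'(x^3)/k_2 = 2 alpha (F(x^1) - F(0)); as F(1) <> F(0) by
   the mean value theorem, alpha = 0 and phi', psi' are constant. *)

Lemma Rdiv_plus_eq_0 (u v k f : R) :
  k <> 0 -> f <> 0 -> u / k + v / f = 0 -> u = - k * v * / f.
Proof.
intros Hk Hf h. replace u with (k * (u / k)) by (field; exact Hk).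
replace (u / k) with (- (v / f)) by lra. field; exact Hf.
Qed.

Lemma is_derive_zero_const (u : R -> R) :
  (forall t : R, is_derive u t 0) -> forall x, u x = u 0.
Proof.
intros Hu x. destruct (Rtotal_order x 0) as [Hx | [-> | Hx]].
- now apply (eq_is_derive u).
- reflexivity.
- symmetry. now apply (eq_is_derive u).
Qed.

Lemma is_derive_unique_up_to_const (u w l : R -> R) :
  (forall t : R, is_derive u t (l t)) -> (forall t : R, is_derive w t (l t)) ->
  forall x, u x = u 0 + (w x - w 0).
Proof.
intros Hu Hw x.
assert (Hd : forall t, is_derive (fun s => u s - w s) t 0).
{ intro t. rewrite <- (Rminus_diag (l t)). exact (is_derive_minus u w t _ _ (Hu t) (Hw t)). }
pose proof (is_derive_zero_const _ Hd x). lra.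
Qed.

Lemma is_derive_const_affine (u : R -> R) (c : R) :
  (forall t : R, is_derive u t c) -> forall x, u x = u 0 + c * x.
Proof.
intros Hu x.
rewrite (is_derive_unique_up_to_const u (fun t => c * t) (fun _ => c) Hu); [ring |].
intro t. auto_derive; [exact I | ring].
Qed.

Lemma separated_partials_bilinear (h : R -> R -> R) (a b : R -> R) :
  (forall x y : R, is_derive (fun s => h s y) x (a y)) ->
  (forall x y : R, is_derive (fun t => h x t) y (b x)) ->
  (forall y, a y = a 0 + (b 1 - b 0) * y) /\
  (forall x, b x = b 0 + (b 1 - b 0) * x) /\
  (forall x y, h x y = h 0 0 + a 0 * x + b 0 * y + (b 1 - b 0) * x * y).
Proof.
intros Ha Hb.
assert (Hx : forall x y, h x y = h 0 y + a y * x)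
  by (intros x y; exact (is_derive_const_affine (fun s => h s y) (a y) (fun s => Ha s y) x)).
assert (Hy : forall x y, h x y = h x 0 + b x * y)
  by (intros x y; exact (is_derive_const_affine (fun t => h x t) (b x) (Hb x) y)).
assert (Hab : forall x y, a y * x + b 0 * y = a 0 * x + b x * y).
{ intros x y. pose proof (Hx x y). pose proof (Hy x y). pose proof (Hy 0 y). pose proof (Hx x 0).
  lra. }
assert (Ha_affine : forall y, a y = a 0 + (b 1 - b 0) * y).
{ intro y. pose proof (Hab 1 y). lra. }
split; [exact Ha_affine | split].
- intro x. pose proof (Hab x 1). pose proof (Ha_affine 1). nra.
- intros x y. rewrite (Hx x y), (Hy 0 y), Ha_affine. ring.
Qed.

Lemma primitive_inv_nonconst (f F : R -> R) :
  (forall x, f x <> 0) -> (forall x, is_derive F x (/ f x)) -> F 1 <> F 0.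
Proof.
intros Hf HF.
destruct (MVT_cor4 F (fun x => / f x) 0 1 (fun c _ => HF c) 1) as [c [Hc _]];
  [rewrite Rminus_0_r, Rabs_R1; lra |].
rewrite Rminus_0_r, Rmult_1_r in Hc.
intro HF10. apply (Rinv_neq_0_compat (f c) (Hf c)). lra.
Qed.

Definition partially_derivable (h : pt -> R) : Prop :=
  forall i p, (i < 3)%nat -> ex_derive (fun t => h (upd i p t)) (coord i p).

Lemma smooth3_partially_derivable (h : pt -> R) : smooth3 h -> partially_derivable h.
Proof. intros [S [HS Hcl]] i p Hi. exact (proj1 (proj2 (Hcl h HS) i Hi) p). Qed.

Lemma partial_is_derive (h : pt -> R) (i : nat) (p : pt) (l : R) :
  partially_derivable h -> (i < 3)%nat -> partial i h p = l ->
  is_derive (fun t => h (upd i p t)) (coord i p) l.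
Proof. intros Hh Hi <-. exact (Derive_correct _ _ (Hh i p Hi)). Qed.

Lemma partial_of_is_derive (h : pt -> R) (i : nat) (p : pt) (w : R -> R) (l : R) :
  (forall t, h (upd i p t) = w t) -> is_derive w (coord i p) l -> partial i h p = l.
Proof. intros Hw Hd. unfold partial. rewrite (Derive_ext _ _ _ Hw). now apply is_derive_unique. Qed.

Definition Lie_metric (G : nat -> nat -> pt -> R) (W : nat -> pt -> R) (i j : nat) (p : pt) : R :=
  sum3 (fun k => W k p * partial k (G i j) p
                 + G k j p * partial i (W k) p
                 + G i k p * partial j (W k) p).

Definition killing_component (f1 : R -> R) (k2 k3 : R) (V1 V2 V3 : pt -> R)
    (i j : nat) (p : pt) : R :=
  match i, j with
  | O, O => 2 / f1 (coord 0 p) * partial 0 V1 p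
  | S O, S O => 2 / k2 * partial 1 V2 p
  | S (S O), S (S O) => 2 / k3 * partial 2 V3 p
  | O, S O | S O, O => partial 0 V2 p / k2 + partial 1 V1 p / f1 (coord 0 p)
  | O, S (S O) | S (S O), O => partial 0 V3 p / k3 + partial 2 V1 p / f1 (coord 0 p)
  | _, _ => partial 1 V3 p / k3 + partial 2 V2 p / k2
  end.

Lemma Derive_inv_sqr (f : R -> R) (x : R) :
  ex_derive f x -> f x <> 0 -> Derive (fun t => / f t ^ 2) x = -2 * Derive f x / f x ^ 3.
Proof.
intros Hd Hf. apply is_derive_unique. auto_derive; [repeat split; auto |].
change (fun t => f t) with f. field; auto.
Qed.

Lemma partial_metric (f1 : R -> R) (k2 k3 : R) (i j k : nat) (p : pt) :
  (i < 3)%nat -> (j < 3)%nat -> (k < 3)%nat ->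
  partial k (metric f1 k2 k3 i j) p =
  if (Nat.eqb i 0 && Nat.eqb j 0 && Nat.eqb k 0)%bool
  then Derive (fun t => / f1 t ^ 2) (coord 0 p) else 0.
Proof.
intros Hi Hj Hk. destruct p as [[x1 x2] x3].
destruct i as [|[|[|i]]]; try lia; destruct j as [|[|[|j]]]; try lia;
  destruct k as [|[|[|k]]]; try lia; unfold partial, metric, frame; simpl;
  try reflexivity; apply Derive_const.
Qed.

(* The [f1'] coming from differentiating [E_1 = f1 d1] cancels against the
   transport term [V^1 f1 d1 g_11]. *)
Lemma Lie_metric_frame (f1 : R -> R) (k2 k3 : R) (V1 V2 V3 : pt -> R) (i j : nat) (p : pt) :
  (forall x, ex_derive f1 x) -> (forall x, f1 x <> 0) -> k2 <> 0 -> k3 <> 0 ->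
  partially_derivable V1 -> (i < 3)%nat -> (j < 3)%nat ->
  Lie_metric (metric f1 k2 k3) (vfield f1 k2 k3 V1 V2 V3) i j p =
  killing_component f1 k2 k3 V1 V2 V3 i j p.
Proof.
intros Hf1 Hnz Hk2 Hk3 HV1 Hi Hj.
assert (HV1x1 : ex_derive (fun t => V1 (upd 0 p t)) (coord 0 p)) by (apply HV1; lia).
destruct p as [[x1 x2] x3]. unfold Lie_metric, sum3. rewrite !partial_metric by lia.
destruct i as [|[|[|i]]]; try lia; destruct j as [|[|[|j]]]; try lia;
  cbn [killing_component]; unfold partial, vfield, frame;
  cbn [metric frame coord upd fst snd Nat.eqb andb];
  rewrite ?Derive_scal.
all: try rewrite Derive_mult by auto.
all: try rewrite Derive_inv_sqr by auto.
all: rewrite ?Derive_const.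
all: change (fun t => f1 t) with f1.
all: field; repeat split; auto.
Qed.

Record killing_system (f1 : R -> R) (k2 k3 : R) (V1 V2 V3 : pt -> R) : Prop := {
  killing_11 : forall p, partial 0 V1 p = 0;
  killing_22 : forall p, partial 1 V2 p = 0;
  killing_33 : forall p, partial 2 V3 p = 0;
  killing_12 : forall p, partial 0 V2 p / k2 + partial 1 V1 p / f1 (coord 0 p) = 0;
  killing_13 : forall p, partial 0 V3 p / k3 + partial 2 V1 p / f1 (coord 0 p) = 0;
  killing_23 : forall p, partial 1 V3 p / k3 + partial 2 V2 p / k2 = 0 }.

Lemma is_Killing_iff_killing_system (f1 : R -> R) (k2 k3 : R) (V1 V2 V3 : pt -> R) :
  (forall x, ex_derive f1 x) -> (forall x, f1 x <> 0) -> k2 <> 0 -> k3 <> 0 ->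
  partially_derivable V1 ->
  is_Killing (metric f1 k2 k3) (vfield f1 k2 k3 V1 V2 V3) <->
  killing_system f1 k2 k3 V1 V2 V3.
Proof.
intros Hf1 Hnz Hk2 Hk3 HV1.
assert (Hcomp : forall i j p, (i < 3)%nat -> (j < 3)%nat ->
  Lie_metric (metric f1 k2 k3) (vfield f1 k2 k3 V1 V2 V3) i j p = 0 <->
  killing_component f1 k2 k3 V1 V2 V3 i j p = 0)
  by (intros; rewrite Lie_metric_frame; tauto).
assert (cancel2 : forall c r, c <> 0 -> 2 / c * r = 0 -> r = 0).
{ intros c r Hc h. replace r with (c / 2 * (2 / c * r)) by (field; auto). rewrite h. ring. }
split.
- intro K.
  assert (K' : forall i j p, (i < 3)%nat -> (j < 3)%nat ->
    killing_component f1 k2 k3 V1 V2 V3 i j p = 0) by (intros i j p Hi Hj; apply Hcomp, K; auto).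
  split; intro p.
  + exact (cancel2 _ _ (Hnz _) (K' 0%nat 0%nat p ltac:(lia) ltac:(lia))).
  + exact (cancel2 _ _ Hk2 (K' 1%nat 1%nat p ltac:(lia) ltac:(lia))).
  + exact (cancel2 _ _ Hk3 (K' 2%nat 2%nat p ltac:(lia) ltac:(lia))).
  + exact (K' 0%nat 1%nat p ltac:(lia) ltac:(lia)).
  + exact (K' 0%nat 2%nat p ltac:(lia) ltac:(lia)).
  + exact (K' 1%nat 2%nat p ltac:(lia) ltac:(lia)).
- intros [K11 K22 K33 K12 K13 K23] i j Hi Hj p. apply Hcomp; auto.
  destruct i as [|[|[|i]]]; try lia; destruct j as [|[|[|j]]]; try lia; cbn [killing_component];
    rewrite ?K11, ?K22, ?K33; auto; ring.
Qed.

Definition killing_closed_form (F : R -> R) (k2 k3 : R) (V1 V2 V3 : pt -> R)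
    (c1 c2 c3 c4 c5 c6 : R) : Prop :=
  forall x1 x2 x3 : R,
    V1 (x1, x2, x3) = c1 * x2 + c2 * x3 + c3 /\
    V2 (x1, x2, x3) = - c1 * k2 * F x1 - c4 / k3 * x3 + c5 /\
    V3 (x1, x2, x3) = - c2 * k3 * F x1 + c4 / k2 * x2 + c6.

Section killing_system_solution.

Variables (f1 F : R -> R) (k2 k3 : R) (V1 V2 V3 : pt -> R).
Hypothesis Hf1 : forall x, f1 x <> 0.
Hypothesis Hk2 : k2 <> 0.
Hypothesis Hk3 : k3 <> 0.
Hypothesis HF : forall x, is_derive F x (/ f1 x).
Hypothesis HV1 : partially_derivable V1.
Hypothesis HV2 : partially_derivable V2.
Hypothesis HV3 : partially_derivable V3.
Hypothesis K11 : forall p, partial 0 V1 p = 0.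
Hypothesis K22 : forall p, partial 1 V2 p = 0.
Hypothesis K33 : forall p, partial 2 V3 p = 0.
Hypothesis K12 : forall p, partial 0 V2 p / k2 + partial 1 V1 p / f1 (coord 0 p) = 0.
Hypothesis K13 : forall p, partial 0 V3 p / k3 + partial 2 V1 p / f1 (coord 0 p) = 0.
Hypothesis K23 : forall p, partial 1 V3 p / k3 + partial 2 V2 p / k2 = 0.

Lemma V1_const_x1 x1 x2 x3 : V1 (x1, x2, x3) = V1 (0, x2, x3).
Proof.
apply (is_derive_zero_const (fun t => V1 (t, x2, x3))). intro t.
exact (partial_is_derive V1 0 (t, x2, x3) 0 HV1 ltac:(lia) (K11 _)).
Qed.

Lemma V2_const_x2 x1 x2 x3 : V2 (x1, x2, x3) = V2 (x1, 0, x3).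
Proof.
apply (is_derive_zero_const (fun t => V2 (x1, t, x3))). intro t.
exact (partial_is_derive V2 1 (x1, t, x3) 0 HV2 ltac:(lia) (K22 _)).
Qed.

Lemma V3_const_x3 x1 x2 x3 : V3 (x1, x2, x3) = V3 (x1, x2, 0).
Proof.
apply (is_derive_zero_const (fun t => V3 (x1, x2, t))). intro t.
exact (partial_is_derive V3 2 (x1, x2, t) 0 HV3 ltac:(lia) (K33 _)).
Qed.

Let a (x3 : R) : R := partial 1 V1 (0, 0, x3).
Let b (x2 : R) : R := partial 2 V1 (0, x2, 0).
Let alpha : R := b 1 - b 0.

Lemma partial1_V1_eq x1 x2 x3 : partial 1 V1 (x1, x2, x3) = a x3.
Proof.
assert (E1 : partial 1 V1 (x1, x2, x3) = partial 1 V1 (0, x2, x3))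
  by (apply Derive_ext; intro t; apply V1_const_x1).
assert (E2 : partial 0 V2 (0, x2, x3) = partial 0 V2 (0, 0, x3))
  by (apply Derive_ext; intro t; apply V2_const_x2).
pose proof (K12 (0, x2, x3)) as h1. pose proof (K12 (0, 0, x3)) as h2.
cbn [coord fst snd] in h1, h2. rewrite E2 in h1. rewrite E1. unfold a.
apply (Rmult_eq_reg_r (/ f1 0)); [unfold Rdiv in *; lra | apply Rinv_neq_0_compat, Hf1].
Qed.

Lemma partial2_V1_eq x1 x2 x3 : partial 2 V1 (x1, x2, x3) = b x2.
Proof.
assert (E1 : partial 2 V1 (x1, x2, x3) = partial 2 V1 (0, x2, x3))
  by (apply Derive_ext; intro t; apply V1_const_x1).
assert (E2 : partial 0 V3 (0, x2, x3) = partial 0 V3 (0, x2, 0))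
  by (apply Derive_ext; intro t; apply V3_const_x3).
pose proof (K13 (0, x2, x3)) as h1. pose proof (K13 (0, x2, 0)) as h2.
cbn [coord fst snd] in h1, h2. rewrite E2 in h1. rewrite E1. unfold b.
apply (Rmult_eq_reg_r (/ f1 0)); [unfold Rdiv in *; lra | apply Rinv_neq_0_compat, Hf1].
Qed.

Lemma V1_separated :
  (forall x3, a x3 = a 0 + alpha * x3) /\ (forall x2, b x2 = b 0 + alpha * x2) /\
  (forall x2 x3, V1 (0, x2, x3) = V1 (0, 0, 0) + a 0 * x2 + b 0 * x3 + alpha * x2 * x3).
Proof.
apply (separated_partials_bilinear (fun x2 x3 => V1 (0, x2, x3))); intros x2 x3.
- exact (partial_is_derive V1 1 (0, x2, x3) _ HV1 ltac:(lia) (partial1_V1_eq 0 x2 x3)).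
- exact (partial_is_derive V1 2 (0, x2, x3) _ HV1 ltac:(lia) (partial2_V1_eq 0 x2 x3)).
Qed.

Lemma V2_closed_form x1 x2 x3 : V2 (x1, x2, x3) = V2 (0, 0, x3) - k2 * a x3 * (F x1 - F 0).
Proof.
rewrite <- (V2_const_x2 0 x2 x3).
rewrite (is_derive_unique_up_to_const (fun t => V2 (t, x2, x3)) (fun t => - k2 * a x3 * F t)
  (fun t => - k2 * a x3 * / f1 t)); [ring | intro t ..].
- apply (partial_is_derive V2 0 (t, x2, x3)); [exact HV2 | lia |].
  pose proof (K12 (t, x2, x3)) as h. rewrite partial1_V1_eq in h.
  exact (Rdiv_plus_eq_0 _ _ _ _ Hk2 (Hf1 t) h).
- exact (is_derive_scal F t _ _ (HF t)).
Qed.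

Lemma V3_closed_form x1 x2 x3 : V3 (x1, x2, x3) = V3 (0, x2, 0) - k3 * b x2 * (F x1 - F 0).
Proof.
rewrite <- (V3_const_x3 0 x2 x3).
rewrite (is_derive_unique_up_to_const (fun t => V3 (t, x2, x3)) (fun t => - k3 * b x2 * F t)
  (fun t => - k3 * b x2 * / f1 t)); [ring | intro t ..].
- apply (partial_is_derive V3 0 (t, x2, x3)); [exact HV3 | lia |].
  pose proof (K13 (t, x2, x3)) as h. rewrite partial2_V1_eq in h.
  exact (Rdiv_plus_eq_0 _ _ _ _ Hk3 (Hf1 t) h).
- exact (is_derive_scal F t _ _ (HF t)).
Qed.

Lemma partial1_V3_eq x1 x2 x3 :
  partial 1 V3 (x1, x2, x3) = partial 1 V3 (0, x2, 0) - k3 * alpha * (F x1 - F 0).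
Proof.
apply (partial_of_is_derive V3 1 (x1, x2, x3)
  (fun t => V3 (0, t, 0) - k3 * (b 0 + alpha * t) * (F x1 - F 0))).
- intro t. cbn [upd fst snd]. rewrite V3_closed_form, (proj1 (proj2 V1_separated)). ring.
- apply (is_derive_minus (fun t => V3 (0, t, 0)) (fun t => k3 * (b 0 + alpha * t) * (F x1 - F 0))).
  + exact (partial_is_derive V3 1 (0, x2, 0) _ HV3 ltac:(lia) eq_refl).
  + auto_derive; [exact I | ring].
Qed.

Lemma partial2_V2_eq x1 x2 x3 :
  partial 2 V2 (x1, x2, x3) = partial 2 V2 (0, 0, x3) - k2 * alpha * (F x1 - F 0).
Proof.
apply (partial_of_is_derive V2 2 (x1, x2, x3)
  (fun t => V2 (0, 0, t) - k2 * (a 0 + alpha * t) * (F x1 - F 0))).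
- intro t. cbn [upd fst snd]. rewrite V2_closed_form, (proj1 V1_separated). ring.
- apply (is_derive_minus (fun t => V2 (0, 0, t)) (fun t => k2 * (a 0 + alpha * t) * (F x1 - F 0))).
  + exact (partial_is_derive V2 2 (0, 0, x3) _ HV2 ltac:(lia) eq_refl).
  + auto_derive; [exact I | ring].
Qed.

Lemma killing_23_separated x1 x2 x3 :
  partial 1 V3 (0, x2, 0) / k3 + partial 2 V2 (0, 0, x3) / k2 = 2 * alpha * (F x1 - F 0).
Proof.
pose proof (K23 (x1, x2, x3)) as h. rewrite partial1_V3_eq, partial2_V2_eq in h.
replace (2 * alpha * (F x1 - F 0))
  with (k3 * alpha * (F x1 - F 0) / k3 + k2 * alpha * (F x1 - F 0) / k2) by (field; auto).
unfold Rdiv in *. lra.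
Qed.

Lemma alpha_eq_0 : alpha = 0.
Proof.
pose proof (killing_23_separated 1 0 0) as h1. pose proof (killing_23_separated 0 0 0) as h0.
assert (Hprod : alpha * (F 1 - F 0) = 0) by lra.
destruct (Rmult_integral _ _ Hprod) as [-> | HF10]; [reflexivity |].
exfalso. apply (primitive_inv_nonconst f1 F Hf1 HF). lra.
Qed.

Let rho : R := partial 1 V3 (0, 0, 0).

Lemma V3_affine_x2 x2 : V3 (0, x2, 0) = V3 (0, 0, 0) + rho * x2.
Proof.
apply (is_derive_const_affine (fun t => V3 (0, t, 0))). intro t.
apply (partial_is_derive V3 1 (0, t, 0)); [exact HV3 | lia |].
pose proof (killing_23_separated 0 t 0) as h1. pose proof (killing_23_separated 0 0 0) as h0.
apply (Rmult_eq_reg_r (/ k3)); [unfold rho, Rdiv in *; lra | apply Rinv_neq_0_compat, Hk3].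
Qed.

Lemma V2_affine_x3 x3 : V2 (0, 0, x3) = V2 (0, 0, 0) + - k2 / k3 * rho * x3.
Proof.
apply (is_derive_const_affine (fun t => V2 (0, 0, t))). intro t.
apply (partial_is_derive V2 2 (0, 0, t)); [exact HV2 | lia |].
pose proof (killing_23_separated 0 0 t) as h. rewrite Rminus_diag, Rmult_0_r in h.
replace (partial 2 V2 (0, 0, t)) with (k2 * (partial 2 V2 (0, 0, t) / k2)) by (field; exact Hk2).
replace (partial 2 V2 (0, 0, t) / k2) with (- (rho / k3)) by (unfold rho; lra).
field; exact Hk3.
Qed.

Lemma killing_system_closed_form :
  exists c1 c2 c3 c4 c5 c6, killing_closed_form F k2 k3 V1 V2 V3 c1 c2 c3 c4 c5 c6.
Proof.
exists (a 0), (b 0), (V1 (0, 0, 0)), (k2 * rho),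
  (V2 (0, 0, 0) + k2 * a 0 * F 0), (V3 (0, 0, 0) + k3 * b 0 * F 0).
destruct V1_separated as (Ha & Hb & HV1_bilinear).
intros x1 x2 x3. split; [| split].
- rewrite V1_const_x1, HV1_bilinear, alpha_eq_0. ring.
- rewrite V2_closed_form, V2_affine_x3, Ha, alpha_eq_0. field. exact Hk3.
- rewrite V3_closed_form, V3_affine_x2, Hb, alpha_eq_0. field. exact Hk2.
Qed.

End killing_system_solution.

Lemma killing_closed_form_system (f1 F : R -> R) (k2 k3 : R) (V1 V2 V3 : pt -> R)
    (c1 c2 c3 c4 c5 c6 : R) :
  (forall x, f1 x <> 0) -> k2 <> 0 -> k3 <> 0 -> (forall x : R, is_derive F x (/ f1 x)) ->
  killing_closed_form F k2 k3 V1 V2 V3 c1 c2 c3 c4 c5 c6 -> killing_system f1 k2 k3 V1 V2 V3.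
Proof.
intros Hf1 Hk2 Hk3 HF H.
assert (H1 : forall x1 x2 x3, V1 (x1, x2, x3) = c1 * x2 + c2 * x3 + c3) by apply H.
assert (H2 : forall x1 x2 x3, V2 (x1, x2, x3) = - c1 * k2 * F x1 - c4 / k3 * x3 + c5) by apply H.
assert (H3 : forall x1 x2 x3, V3 (x1, x2, x3) = - c2 * k3 * F x1 + c4 / k2 * x2 + c6) by apply H.
assert (HF' : forall x, Derive F x = / f1 x) by (intro x; exact (is_derive_unique _ _ _ (HF x))).
assert (exF : forall x, ex_derive F x) by (intro x; exists (/ f1 x); exact (HF x)).
split; intros [[x1 x2] x3]; cbn [coord fst snd].
- apply (partial_of_is_derive V1 0 _ (fun _ => c1 * x2 + c2 * x3 + c3));
    [intro t; apply H1 | exact (is_derive_const _ _)].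
- apply (partial_of_is_derive V2 1 _ (fun _ => - c1 * k2 * F x1 - c4 / k3 * x3 + c5));
    [intro t; apply H2 | exact (is_derive_const _ _)].
- apply (partial_of_is_derive V3 2 _ (fun _ => - c2 * k3 * F x1 + c4 / k2 * x2 + c6));
    [intro t; apply H3 | exact (is_derive_const _ _)].
- rewrite (partial_of_is_derive V2 0 _ (fun t => - c1 * k2 * F t - c4 / k3 * x3 + c5)
      (- c1 * k2 / f1 x1)),
    (partial_of_is_derive V1 1 _ (fun t => c1 * t + c2 * x3 + c3) c1).
  + field. auto.
  + intro t. apply H1.
  + auto_derive; [exact I | ring].
  + intro t. apply H2.
  + cbn [coord fst snd]. auto_derive; [apply exF | change (fun x => F x) with F].
    rewrite HF'. field. auto.
- rewrite (partial_of_is_derive V3 0 _ (fun t => - c2 * k3 * F t + c4 / k2 * x2 + c6)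
      (- c2 * k3 / f1 x1)),
    (partial_of_is_derive V1 2 _ (fun t => c1 * x2 + c2 * t + c3) c2).
  + field. auto.
  + intro t. apply H1.
  + auto_derive; [exact I | ring].
  + intro t. apply H3.
  + cbn [coord fst snd]. auto_derive; [apply exF | change (fun x => F x) with F].
    rewrite HF'. field. auto.
- rewrite (partial_of_is_derive V3 1 _ (fun t => - c2 * k3 * F x1 + c4 / k2 * t + c6) (c4 / k2)),
    (partial_of_is_derive V2 2 _ (fun t => - c1 * k2 * F x1 - c4 / k3 * t + c5) (- c4 / k3)).
  + field. auto.
  + intro t. apply H2.
  + auto_derive; [exact I | field; auto].
  + intro t. apply H3.
  + auto_derive; [exact I | field; auto].
Qed.

Theorem mainTheorem10
  (f1 : R -> R) (k2 k3 : R) (F : R -> R) (V1 V2 V3 : pt -> R)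
  (Hf1 : smooth1 f1) (Hf1nz : forall x, f1 x <> 0)
  (Hk2 : k2 <> 0) (Hk3 : k3 <> 0)
  (HF : forall x, is_derive F x (/ f1 x))
  (HV1 : smooth3 V1) (HV2 : smooth3 V2) (HV3 : smooth3 V3) :
  is_Killing (metric f1 k2 k3) (vfield f1 k2 k3 V1 V2 V3) <->
  exists c1 c2 c3 c4 c5 c6 : R, forall x1 x2 x3 : R,
    V1 (x1, x2, x3) = c1 * x2 + c2 * x3 + c3 /\
    V2 (x1, x2, x3) = - c1 * k2 * F x1 - c4 / k3 * x3 + c5 /\
    V3 (x1, x2, x3) = - c2 * k3 * F x1 + c4 / k2 * x2 + c6.
Proof.
apply smooth3_partially_derivable in HV1, HV2, HV3.
rewrite is_Killing_iff_killing_system by (auto; exact (Hf1 0%nat)).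
split.
- intros [K11 K22 K33 K12 K13 K23].
  exact (killing_system_closed_form f1 F k2 k3 V1 V2 V3 Hf1nz Hk2 Hk3 HF HV1 HV2 HV3
    K11 K22 K33 K12 K13 K23).
- intros (c1 & c2 & c3 & c4 & c5 & c6 & H).
  exact (killing_closed_form_system f1 F k2 k3 V1 V2 V3 c1 c2 c3 c4 c5 c6 Hf1nz Hk2 Hk3 HF H).
Qed.
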